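(* Let $B=(V,E)$ be a simple Bratteli diagram with $V_0=\{v^0\}$ and $V_k=\{v_1^k,\dots,v_{n(k)}^k\}$, and for $k\ge1$ let $h_j^k\ge1$ be the number of finite paths from $v^0$ to $v_j^k$. Then $\mathbb Q(K^0(V,E),[v^0])=\mathbb Z[v^0]$ if and only if $\gcd(h_1^k,\dots,h_{n(k)}^k)=1$ for all $k\ge1$.
   Context: A Bratteli diagram has levels $V_k$ (finite) and edges $E_k$ from $V_{k-1}$ to $V_k$, with incidence matrices $A_k$ ($|V_k|\times|V_{k-1}|$) counting edges; simple means some telescoping has strictly positive incidence matrices. $K^0(V,E)$ is the direct limit of $\mathbb Z^{V_0}\xrightarrow{A_1}\mathbb Z^{V_1}\xrightarrow{A_2}\cdots$ ordered by the images of the positive cones, with order unit $[v^0]$ the class of $1\in\mathbb Z^{V_0}$. $\mathbb Q(G,u)=\{g\in G:pg=mu\text{ for some nonzero }p\in\mathbb Z,\ m\in\mathbb Z\}$. *)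

From HB Require Import structures.
From mathcomp Require Import all_boot all_order all_algebra.
Set Implicit Arguments. Unset Strict Implicit. Unset Printing Implicit Defensive.
Import Order.TTheory GRing.Theory Num.Theory.
Local Open Scope ring_scope.

(* A Bratteli diagram is given by the level sizes nv k = |V_k| and, for each
   k, the incidence matrix inc k : |V_(k+1)| x |V_k| (this is A_(k+1) of the
   paper), whose (i,j) entry is the number of edges from v_j^k to v_i^(k+1). *)
Section Bratteli.
Variable nv : nat -> nat.
Variable inc : forall k, 'M[nat]_(nv k.+1, nv k).

Definition is_bratteli : Prop :=
  (forall k (i : 'I_(nv k.+1)), exists j : 'I_(nv k), (0 < inc k i j)%N) /\
  (forall k (j : 'I_(nv k)), exists i : 'I_(nv k.+1), (0 < inc k i j)%N).

Fixpoint trans (k d : nat) : 'M[nat]_(nv (d + k), nv k) :=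
  match d with
  | 0 => 1%:M
  | d'.+1 => inc (d' + k) *m trans k d'
  end.

Definition simple_bratteli : Prop :=
  forall k, exists d, (0 < d)%N /\
    forall i j, (0 < trans k d i j)%N.

Fixpoint hvec (k : nat) : 'cV[nat]_(nv k) :=
  match k with
  | 0 => const_mx 1%N
  | k'.+1 => inc k' *m hvec k'
  end.
Definition npaths (k : nat) (j : 'I_(nv k)) : nat := hvec k j ord0.

(* The direct limit K^0(V,E) of Z^{V_0} -A_1-> Z^{V_1} -A_2-> ...
   Elements are represented by pairs (k, x) with x in Z^{V_k}. *)
Definition DL := {k : nat & 'cV[int]_(nv k)}.

Definition push (k d : nat) (x : 'cV[int]_(nv k)) : 'cV[int]_(nv (d + k)) :=
  map_mx (fun n : nat => n%:Z) (trans k d) *m x.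

Definition dl_eq (g1 g2 : DL) : Prop :=
  let: existT k x := g1 in let: existT l y := g2 in
  exists d e (H : (d + k = e + l)%N),
    castmx (congr1 nv H, erefl 1%N) (push d x) = push e y.

Definition dl_scale (p : int) (g : DL) : DL :=
  let: existT k x := g in existT _ k (p *: x).

Definition dl_unit : DL := existT _ 0%N (const_mx 1).

Definition inQ (g : DL) : Prop :=
  exists (p m : int), p != 0 /\ dl_eq (dl_scale p g) (dl_scale m dl_unit).

Definition inZu (g : DL) : Prop :=
  exists t : int, dl_eq g (dl_scale t dl_unit).

End Bratteli.

Arguments npaths {nv} inc k j.

From HB Require Import structures.
From mathcomp Require Import all_boot all_order all_algebra.

(* Write h_n for the column of path counts at level n; it represents [v^0]
   at level n.  If p x = m [v^0] with p != 0, then at some level n the image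
   X of x satisfies p X = m h_n; when the entries of h_n are coprime, p divides
   m, so X = (m / p) h_n.  Conversely h_k / gcd(h_k) lies in Q, and if it
   equals t [v^0] then gcd(h_k) t h_n = h_n with h_n != 0 at some level n,
   which forces gcd(h_k) = 1. *)

Set Implicit Arguments.
Unset Strict Implicit.
Unset Printing Implicit Defensive.

Import GRing.Theory.
Local Open Scope ring_scope.

Lemma dvdn_mul_biggcd (I : finType) (F : I -> nat) a b :
  (forall i, a %| b * F i)%N -> (a %| b * \big[gcdn/0]_i F i)%N.
Proof.
by move=> dvdF; rewrite (big_morph (muln b) (muln_gcdr b) (muln0 b)); apply/dvdn_biggcdP.
Qed.

Lemma castmxZ (R : pzRingType) m n m' n' (eq_mn : (m = m') * (n = n'))
    (a : R) (A : 'M[R]_(m, n)) :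
  castmx eq_mn (a *: A) = a *: castmx eq_mn A.
Proof. by apply/matrixP => i j; rewrite !(castmxE, mxE). Qed.

Lemma castmx_family (R : Type) (f : nat -> nat) (F : forall k, 'cV[R]_(f k))
    k l (eq_kl : k = l) :
  castmx (congr1 f eq_kl, erefl 1%N) (F k) = F l.
Proof. by case: l / eq_kl; rewrite castmx_id. Qed.

Lemma scalemx_fixed_eq1 (R : idomainType) m n (c : R) (A : 'M[R]_(m, n)) :
  A != 0 -> c *: A = A -> c = 1.
Proof.
move=> nzA cA; apply/eqP; rewrite -subr_eq0.
have : (c - 1) *: A == 0 by rewrite scalerBl scale1r cA subrr.
by rewrite scalemx_eq0 (negPf nzA) orbF.
Qed.

Section CoprimeColumn.
Variables (n : nat) (v : 'cV[nat]_n).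
Hypothesis gcd_v : \big[gcdn/0]_(j < n) v j ord0 = 1%N.

Lemma dvdz_scale_coprime (X : 'cV[int]_n) (p m : int) :
  p *: X = m *: map_mx Posz v -> (p %| m)%Z.
Proof.
move=> pXmv; rewrite dvdzE -[`|m|%N]muln1 -gcd_v.
apply: dvdn_mul_biggcd => j.
have /(congr1 absz) := congr1 (fun A : 'cV[int]_n => A j ord0) pXmv.
by rewrite !mxE !abszM absz_nat => <-; apply: dvdn_mulr.
Qed.

Lemma scale_coprime_divz (X : 'cV[int]_n) (p m : int) :
  p != 0 -> p *: X = m *: map_mx Posz v -> X = (m %/ p)%Z *: map_mx Posz v.
Proof.
move=> nz_p pXmv; apply: (scalemx_inj nz_p).
by rewrite scalerA mulrC divzK ?(dvdz_scale_coprime pXmv).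
Qed.

End CoprimeColumn.

Section PathCounts.
Variables (nv : nat -> nat) (inc : forall k, 'M[nat]_(nv k.+1, nv k)).

Definition hvecz k : 'cV[int]_(nv k) := map_mx Posz (hvec inc k).

Lemma trans_hvec k d : trans inc k d *m hvec inc k = hvec inc (d + k).
Proof. by elim: d => [|d IHd] /=; rewrite ?mul1mx // -mulmxA IHd. Qed.

Lemma push_hvecz k d : push inc d (hvecz k) = hvecz (d + k).
Proof. by rewrite /push /hvecz -map_mxM trans_hvec. Qed.

Lemma pushZ k d (a : int) (x : 'cV[int]_(nv k)) :
  push inc d (a *: x) = a *: push inc d x.
Proof. by rewrite /push scalemxAr. Qed.

Lemma push0 k (x : 'cV[int]_(nv k)) : push inc 0 x = x.
Proof. by rewrite /push /= map_mx1 mul1mx. Qed.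

Lemma dl_eq_scale_unitP k (x : 'cV[int]_(nv k)) (t : int) :
  dl_eq inc (existT _ k x) (dl_scale t (dl_unit nv)) <->
  exists d e (H : (d + k = e + 0)%N),
    castmx (congr1 nv H, erefl 1%N) (push inc d x) = t *: hvecz (e + 0).
Proof.
have unitE : const_mx 1 = hvecz 0 by rewrite /hvecz map_const_mx.
by split=> -[d [e [H E]]]; exists d, e, H; move: E;
  rewrite /= unitE pushZ push_hvecz.
Qed.

Hypothesis nv0 : nv 0 = 1%N.

Lemma gcd_npaths0 : \big[gcdn/0]_(j < nv 0) npaths inc 0 j = 1%N.
Proof.
have j0 : (0 < nv 0)%N by rewrite nv0.
by apply/eqP; rewrite -dvdn1 (biggcdn_inf (Ordinal j0)) // /npaths mxE.
Qed.

Hypothesis bratteli : is_bratteli inc.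

Lemma exists_npaths_gt0 k : exists j, (0 < npaths inc k j)%N.
Proof.
have [_ out_edge] := bratteli; elim: k => [|k [j hj_gt0]].
  have j0 : (0 < nv 0)%N by rewrite nv0.
  by exists (Ordinal j0); rewrite /npaths mxE.
have [i inc_gt0] := out_edge k j; exists i.
by rewrite /npaths mxE (bigD1 j) //= ltn_addr // muln_gt0 inc_gt0.
Qed.

Lemma hvecz_neq0 k : hvecz k != 0.
Proof.
have [j hj_gt0] := exists_npaths_gt0 k.
by apply: contraTneq hj_gt0 => /matrixP/(_ j ord0); rewrite /npaths !mxE => -[->].
Qed.

Lemma inQ_inZu (gcd_paths : forall k, \big[gcdn/0]_(j < nv k) npaths inc k j = 1%N)
    (g : DL nv) :
  inQ inc g -> inZu inc g.
Proof.
case: g => k x [p [m [nz_p /dl_eq_scale_unitP [d [e [H E]]]]]].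
exists (m %/ p)%Z; apply/dl_eq_scale_unitP; exists d, e, H.
by apply: scale_coprime_divz nz_p _; rewrite ?gcd_paths // -castmxZ -pushZ.
Qed.

Lemma gcd_npaths_eq1 (Q_Z : forall g : DL nv, inQ inc g -> inZu inc g) k :
  \big[gcdn/0]_(j < nv k) npaths inc k j = 1%N.
Proof.
set c := \big[gcdn/0]_(j < nv k) _.
pose y := map_mx (fun a => Posz (a %/ c)) (hvec inc k).
have cy : Posz c *: y = hvecz k.
  apply/matrixP => i j; rewrite !mxE -PoszM mulnC divnK //.
  by rewrite (ord1 j); apply: (biggcdn_inf i).
have nz_c : Posz c != 0.
  by apply: contra_neq (hvecz_neq0 k) => c0; rewrite -cy c0 scale0r.
have [t /dl_eq_scale_unitP [d [e [H E]]]] : inZu inc (existT _ k y).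
  apply: Q_Z; exists (Posz c), 1; split => //; apply/dl_eq_scale_unitP.
  by exists 0%N, k, (esym (addn0 k)); rewrite push0 cy scale1r castmx_family.
have ct1 : Posz c * t = 1.
  apply: (scalemx_fixed_eq1 (hvecz_neq0 (e + 0))).
  by rewrite -scalerA -E -castmxZ -pushZ cy push_hvecz castmx_family.
have : (Posz c %| Posz c * t)%Z by apply: dvdz_mulr.
by rewrite ct1 dvdzE dvdn1 => /eqP.
Qed.

End PathCounts.

Local Close Scope ring_scope.

Theorem mainTheorem18 (nv : nat -> nat)
    (inc : forall k, 'M[nat]_(nv k.+1, nv k)) :
  nv 0 = 1%N ->
  is_bratteli inc ->
  simple_bratteli inc ->
  (forall g : DL nv, inQ inc g <-> inZu inc g) <->
  (forall k, (1 <= k)%N ->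
     \big[gcdn/0%N]_(j < nv k) npaths inc k j = 1%N).
Proof.
move=> nv0 bratteli _; split=> [QZ k _ | gcd_paths g].
  by apply: gcd_npaths_eq1 => // g /QZ.
have gcd_all k : \big[gcdn/0]_(j < nv k) npaths inc k j = 1%N.
  by case: k => [|k]; [apply: gcd_npaths0 | apply: gcd_paths].
split; first exact: inQ_inZu.
by case: g => k x [t tE]; exists 1%R, t; rewrite /= scale1r.
Qed.
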